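(* With the construction described in the context, for every fixed $\varepsilon>0$, as $N\to+\infty$, $$\frac{1}{\sum_{n\in\mathbb{N}}f(n)^2}\sum_{n\in\mathbb{N}}\frac{f(n)h(n)}{n^{\sigma}}\sum_{\substack{q\mid n\\ q\le n/N^{\varepsilon}}}f(q)q^{\sigma}=o(\mathcal{A}_N),$$ where the implied rate of convergence depends only on $\varepsilon$.
   Context: Notation: $\log_2 x=\log\log x$, $\log_3 x=\log\log\log x$. Fix $A>0$. Let $N$ be a large parameter and $\sigma=\frac12+\frac{A}{\log_2 N}$. Fix $\gamma\in(0,(e-1)^{-1})$. Let $\mathcal{P}$ be the set of primes $p$ with $e\log N\log_2 N<p\le \exp((\log_2 N)^{\gamma})\log N\log_2 N$. Let $f$ be the multiplicative function supported on squarefree integers (so $f(1)=1$) with $f(p)=\dfrac{(\log N)^{1-\sigma}(\log_2 N)^{\sigma}}{(\log_3 N)^{1-\sigma}}\cdot\dfrac{1}{p^{\sigma}(\log p-\log_2 N-\log_3 N)}$ for $p\in\mathcal{P}$ and $f(p)=0$ for primes $p\notin\mathcal{P}$. Let $h$ be the multiplicative function $h(n)=\prod_{p\mid n}\frac{p}{p+1}$ ($h(1)=1$). Define $$\mathcal{A}_N=\frac{1}{\sum_{n\in\mathbb{N}}f(n)^2}\sum_{n\in\mathbb{N}}\frac{f(n)h(n)}{n^{\sigma}}\sum_{q\mid n}f(q)q^{\sigma}=\prod_{p\in\mathcal{P}}\frac{1+f(p)^2h(p)+f(p)h(p)p^{-\sigma}}{1+f(p)^2}.$$ *)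

From mathcomp Require Import all_boot all_order all_algebra.
From mathcomp Require Import all_classical all_reals all_analysis.
Set Implicit Arguments. Unset Strict Implicit. Unset Printing Implicit Defensive.
Import Order.TTheory GRing.Theory Num.Theory.
Local Open Scope ring_scope.

Section Defs.
Variable R : realType.
Variables (A gam : R) (N : nat).

(* log N, log_2 N = log log N, log_3 N = log log log N *)
Definition L1 : R := ln (N%:R).
Definition L2 : R := ln L1.
Definition L3 : R := ln L2.

Definition sigma : R := 2^-1 + A / L2.

Definition Pupper : R := expR (L2 `^ gam) * L1 * L2.

Definition inP (p : nat) : bool :=
  [&& prime p, expR 1 * L1 * L2 < p%:R & p%:R <= Pupper].

Definition Pbound : nat := (Num.truncn Pupper).+1.

Definition fp (p : nat) : R :=
  (L1 `^ (1 - sigma) * L2 `^ sigma / L3 `^ (1 - sigma)) *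
  (1 / (p%:R `^ sigma * (ln p%:R - L2 - L3))).

Definition sqfree (n : nat) : bool := \prod_(p <- primes n) p == n.

Definition f (n : nat) : R :=
  if [&& 0 < n, sqfree n & all inP (primes n)]%N
  then \prod_(p <- primes n) fp p else 0.

Definition h (n : nat) : R := \prod_(p <- primes n) (p%:R / (p.+1)%:R).

(* product of all primes of P: every n with f n <> 0 divides it, hence
   the sums over n in N below are exactly sums over 1 <= n <= Mprod *)
Definition Mprod : nat := \prod_(p < Pbound | inP p) p.

Definition sum_f2 : R := \sum_(1 <= n < Mprod.+1) f n ^+ 2.

Definition calA : R :=
  sum_f2^-1 * \sum_(1 <= n < Mprod.+1)
     (f n * h n / n%:R `^ sigma *
      \sum_(q <- divisors n) f q * q%:R `^ sigma).

Definition calB (eps : R) : R :=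
  sum_f2^-1 * \sum_(1 <= n < Mprod.+1)
     (f n * h n / n%:R `^ sigma *
      \sum_(q <- divisors n | q%:R <= n%:R / N%:R `^ eps) f q * q%:R `^ sigma).

End Defs.

(* Rankin's trick.  Put g(m) = f(m) h(m) / m^sigma.  As f and h are multiplicative on
   the squarefree support, writing n = q m turns the q-term of the inner sum into
   f(q)^2 h(q) g(m), and the condition q <= n / N^eps into m >= N^eps; hence the numerator
   of the restricted quantity is at most (sum_q f(q)^2 h(q)) * sum_(m >= N^eps) g(m),
   while the diagonal terms q = n alone show that the numerator of A_N is at least
   sum_q f(q)^2 h(q).  For alpha >= 0 the tail is at most
     N^(-eps alpha) sum_m f(m) m^(alpha - sigma)
       <= N^(-eps alpha) exp(sum_(p in P) f(p) p^(alpha - sigma)).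
   With alpha = 1 / log(max P) we have p^alpha <= e and f(p) p^(alpha - sigma) <= (log N)^(-1/2),
   so the exponent is at most exp((log_2 N)^gam + log_2 N / 2) log_2 N + 1, which is
   negligible against eps alpha log N = eps log N / ((log_2 N)^gam + log_2 N + log_3 N)
   because gam < 1. *)

From mathcomp Require Import all_boot all_order all_algebra.
From mathcomp Require Import all_classical all_reals all_analysis.
From mathcomp Require Import ring lra.
Import Order.TTheory GRing.Theory Num.Theory.
Local Open Scope ring_scope.

Lemma logn_prod_primes p (s : seq nat) : all prime s ->
  logn p (\prod_(r <- s) r) = count_mem p s.
Proof.
elim: s => [|r s IH] /=; first by rewrite big_nil logn1.
move=> /andP[pr ps]; rewrite big_cons lognM ?(prime_gt0 pr) //; last first.
  by rewrite big_seq; apply: prodn_cond_gt0 => i /(allP ps) /prime_gt0.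
by rewrite IH // logn_prime // eq_sym.
Qed.

Lemma sqfree_logn_le1 p n : sqfree n -> (logn p n <= 1)%N.
Proof.
move=> /eqP sq; rewrite -sq logn_prod_primes ?all_prime_primes //.
by rewrite count_uniq_mem ?primes_uniq // leq_b1.
Qed.

Lemma logn_le1_sqfree n : (0 < n)%N -> (forall p, logn p n <= 1)%N -> sqfree n.
Proof.
move=> n_gt0 le1; apply/eqP; rewrite {2}(prod_prime_decomp n_gt0) prime_decompE.
rewrite big_map; apply: eq_big_seq => p; rewrite -logn_gt0 /=.
by have := le1 p; case: (logn p n) => [|[|]].
Qed.

Lemma sqfree_dvd n q : (0 < n)%N -> sqfree n -> (q %| n)%N -> sqfree q.
Proof.
move=> n_gt0 sq qn; apply: logn_le1_sqfree => [|p]; first exact: dvdn_gt0 qn.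
exact: leq_trans (dvdn_leq_log p n_gt0 qn) (sqfree_logn_le1 p n sq).
Qed.

Lemma perm_primes_sqfree_dvd {n q} : (0 < n)%N -> sqfree n -> (q %| n)%N ->
  perm_eq (primes n) (primes q ++ primes (n %/ q)).
Proof.
move=> n_gt0 sq qn.
have q_gt0 : (0 < q)%N by apply: dvdn_gt0 qn.
have nq_gt0 : (0 < n %/ q)%N by rewrite divn_gt0 // dvdn_leq.
have en : n = (q * (n %/ q))%N by rewrite mulnC divnK.
apply: uniq_perm; first exact: primes_uniq.
  rewrite cat_uniq !primes_uniq andbT /=; apply/hasPn => p pnq; apply/negP => pq.
  rewrite -!logn_gt0 in pnq pq.
  by have := sqfree_logn_le1 p n sq; rewrite {1}en lognM // leqNgt (leq_add pq pnq).
by move=> p; rewrite mem_cat {1}en primesM.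
Qed.

Lemma eq_primes_sqfree a b : sqfree a -> sqfree b -> primes a =i primes b -> a = b.
Proof.
move=> /eqP sq_a /eqP sq_b eq_ab; rewrite -sq_a -sq_b; congr (\prod_(r <- _) r).
exact: (irr_sorted_eq ltn_trans ltnn (sorted_primes _) (sorted_primes _)).
Qed.

Definition sqfree_over (P : pred nat) n := [&& 0 < n, sqfree n & all P (primes n)]%N.

Lemma sqfree_over_dvd {P n q} : sqfree_over P n -> (q %| n)%N -> sqfree_over P q.
Proof.
case/and3P=> n_gt0 sq nP qn; apply/and3P; split.
- exact: dvdn_gt0 qn.
- exact: sqfree_dvd sq qn.
apply/allP => p; rewrite mem_primes => /and3P[pp _ pq]; apply: (allP nP).
by rewrite mem_primes pp n_gt0 (dvdn_trans pq qn).
Qed.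

Lemma big_primes_sqfree_dvd (R : Type) (idx : R) (op : Monoid.com_law idx)
    (F : nat -> R) n q : (0 < n)%N -> sqfree n -> (q %| n)%N ->
  \big[op/idx]_(p <- primes n) F p =
    op (\big[op/idx]_(p <- primes q) F p) (\big[op/idx]_(p <- primes (n %/ q)) F p).
Proof.
by move=> n_gt0 sq qn; rewrite (perm_big _ (perm_primes_sqfree_dvd n_gt0 sq qn)) big_cat.
Qed.

Lemma ler_sum_subset_uniq (R : numDomainType) (T : eqType) (u t : seq T) (G : T -> R) :
  uniq u -> uniq t -> {subset u <= t} -> (forall x, x \in t -> 0 <= G x) ->
  \sum_(x <- u) G x <= \sum_(x <- t) G x.
Proof.
move=> uu ut sub G_ge0.
rewrite (perm_big [seq x <- t | x \in u]); last first.
  apply: uniq_perm; rewrite ?filter_uniq // => x.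
  rewrite mem_filter; case xu: (x \in u) => //=.
  by rewrite sub.
rewrite big_filter big_mkcond big_seq [leRHS]big_seq.
by apply: ler_sum => x xt; case: ifP => // _; apply: G_ge0.
Qed.

Lemma perm_divisors_index_iota {n M} : (0 < n <= M)%N ->
  perm_eq (divisors n) [seq d <- index_iota 1 M.+1 | d %| n]%N.
Proof.
case/andP=> n_gt0 nM; apply: uniq_perm; rewrite ?divisors_uniq ?filter_uniq ?iota_uniq //.
move=> d; rewrite mem_filter mem_index_iota -dvdn_divisors //.
case dn: (d %| n)%N => //=.
by rewrite (dvdn_gt0 n_gt0 dn) ltnS (leq_trans (dvdn_leq n_gt0 dn) nM).
Qed.

Lemma sum_dvdn_div_le (R : numDomainType) (G : nat -> R) q M :
  (0 < q)%N -> (forall m, 0 <= G m) ->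
  \sum_(1 <= n < M.+1 | (q %| n)%N) G (n %/ q)%N <= \sum_(1 <= m < M.+1) G m.
Proof.
move=> q_gt0 G_ge0; rewrite -big_filter -(big_map (divn^~ q) xpredT G).
apply: ler_sum_subset_uniq; rewrite ?iota_uniq //.
- rewrite map_inj_in_uniq ?filter_uniq ?iota_uniq // => x y.
  by rewrite !mem_filter => /andP[qx _] /andP[qy _] e; rewrite -(divnK qx) -(divnK qy) e.
move=> m /mapP[n]; rewrite mem_filter !mem_index_iota => /andP[qn /andP[n_ge1 nM]] ->.
by rewrite divn_gt0 // dvdn_leq //= ltnS (leq_trans (leq_div n q)) // -ltnS.
Qed.

Lemma sum_sqfree_over_prod_le {R : numDomainType} {P : pred nat} {B : nat} (M : nat)
    {w : nat -> R} :
  (forall p, P p -> p < B)%N -> (forall p, P p -> 0 <= w p) ->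
  \sum_(1 <= m < M.+1 | sqfree_over P m) \prod_(p <- primes m) w p
    <= \prod_(i < B | P i) (1 + w i).
Proof.
move=> P_lt w_ge0.
(* m is encoded by its set of prime factors; expanding the product sums over all sets. *)
pose W (i : 'I_B) := if P i then w i else 0.
have W_ge0 i : 0 <= W i by rewrite /W; case: ifP => // /w_ge0.
pose primeset m : {set 'I_B} := [set i | val i \in primes m].
pose Psi (J : {set 'I_B}) := \prod_(i < B) (if i \in J then W i else 1).
have Psi_primeset m : sqfree_over P m -> \prod_(p <- primes m) w p = Psi (primeset m).
  case/and3P=> _ _ mP; rewrite /Psi -big_mkcond /=.
  transitivity (\prod_(i < B | val i \in primes m) w i); last first.
    by apply: eq_big => [i|i]; rewrite ?inE // /W => /(allP mP) ->.
  rewrite -(big_mkord (mem (primes m)) w) -[in RHS]big_filter.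
  apply: perm_big; apply: uniq_perm; rewrite ?primes_uniq ?filter_uniq ?iota_uniq // => p.
  rewrite mem_filter mem_index_iota /=.
  by case pm: (p \in primes m) => //=; rewrite P_lt // (allP mP).
have primeset_inj : {in sqfree_over P &, injective primeset}.
  have sub a b : sqfree_over P a -> primeset a = primeset b -> {subset primes a <= primes b}.
    case/and3P=> _ _ aP eab p pa.
    have : Ordinal (P_lt p (allP aP p pa)) \in primeset a by rewrite inE.
    by rewrite eab inE.
  move=> a b sa sb eab; apply: eq_primes_sqfree; [by case/and3P: sa | by case/and3P: sb |].
  by move=> p; apply/idP/idP; [apply: sub | apply: sub sb (esym eab) p].
rewrite -big_filter (eq_big_seq (Psi \o primeset)); last first.
  by move=> m; rewrite mem_filter => /andP[/Psi_primeset ->].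
have -> : \prod_(i < B | P i) (1 + w i) = \sum_(J : {set 'I_B}) Psi J.
  rewrite big_mkcond /= (eq_bigr (fun i => W i + 1)) => [|i _]; last first.
    by rewrite /W; case: ifP; rewrite ?add0r // addrC.
  by rewrite bigA_distr; apply: eq_bigl => J; rewrite inE.
rewrite -(big_map primeset xpredT Psi); apply: ler_sum_subset_uniq.
- rewrite map_inj_in_uniq ?filter_uniq ?iota_uniq // => a b.
  by rewrite !mem_filter => /andP[sa _] /andP[sb _]; apply: primeset_inj.
- exact: index_enum_uniq.
- by move=> J _; apply: mem_index_enum.
by move=> J _; apply: prodr_ge0 => i _; case: ifP.
Qed.

Lemma prod1D_le_expR_sum (R : realType) (I : Type) (r : seq I) (P : pred I) (w : I -> R) :
  (forall i, P i -> 0 <= w i) ->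
  \prod_(i <- r | P i) (1 + w i) <= expR (\sum_(i <- r | P i) w i).
Proof.
move=> w_ge0; rewrite expR_sum; apply: ler_prod => i Pi.
by rewrite addr_ge0 ?w_ge0 ?expR_ge1Dx.
Qed.

Lemma powR_prod (R : realType) (I : Type) (r : seq I) (F : I -> R) (x : R) :
  (forall i, 0 <= F i) -> (\prod_(i <- r) F i) `^ x = \prod_(i <- r) F i `^ x.
Proof.
move=> F_ge0; elim: r => [|i r IH]; first by rewrite !big_nil powR1.
by rewrite !big_cons powRM ?IH //; apply: prodr_ge0.
Qed.

Section Reduction.
Variables (R : realType) (A gam : R) (N : nat).
Local Notation f := (f A gam N).
Local Notation fp := (fp A N).
Local Notation h := (h R).
Local Notation sigma := (sigma A N).
Local Notation inP := (inP gam N).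
Local Notation M := (Mprod gam N).

Lemma fE n : f n = if sqfree_over inP n then \prod_(p <- primes n) fp p else 0.
Proof. by []. Qed.

Lemma inP_lt_Pbound p : inP p -> (p < Pbound gam N)%N.
Proof.
case/and3P=> _ _ pP; rewrite /Pbound ltnS truncn_ge_nat //.
exact: le_trans (ler0n _ _) pP.
Qed.

Lemma f_dvd_mul {n q} : sqfree_over inP n -> (q %| n)%N -> f n = f q * f (n %/ q).
Proof.
move=> sn qn; have /and3P[n_gt0 sq _] := sn.
rewrite !fE sn (sqfree_over_dvd sn qn) (sqfree_over_dvd sn (dvdn_div qn)).
exact: big_primes_sqfree_dvd.
Qed.

Lemma h_dvd_mul {n q} : sqfree_over inP n -> (q %| n)%N -> h n = h q * h (n %/ q).
Proof. by case/and3P=> n_gt0 sq _ qn; apply: big_primes_sqfree_dvd. Qed.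

Lemma h_ge0 n : 0 <= h n.
Proof. by apply: prodr_ge0 => p _; apply: divr_ge0. Qed.

Lemma h_le1 n : h n <= 1.
Proof.
apply: prodr_ile1 => p _; rewrite divr_ge0 //= ler_pdivrMr ?ltr0n //.
by rewrite mul1r ler_nat.
Qed.

Hypothesis fp_ge0 : forall p, inP p -> 0 <= fp p.

Lemma f_ge0 n : 0 <= f n.
Proof.
rewrite fE; case: ifP => // /and3P[_ _ nP].
by rewrite big_seq; apply: prodr_ge0 => p /(allP nP) /fp_ge0.
Qed.

Definition g m := f m * h m / m%:R `^ sigma.

Lemma g_ge0 m : 0 <= g m.
Proof. by rewrite /g mulr_ge0 ?mulr_ge0 ?f_ge0 ?h_ge0 ?invr_ge0 ?powR_ge0. Qed.

Definition sum_f2h := \sum_(1 <= n < M.+1) f n ^+ 2 * h n.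

Definition calA_sum := \sum_(1 <= n < M.+1)
  (g n * \sum_(q <- divisors n) f q * q%:R `^ sigma).

Definition calB_sum (eps : R) := \sum_(1 <= n < M.+1)
  (g n * \sum_(q <- divisors n | q%:R <= n%:R / N%:R `^ eps) f q * q%:R `^ sigma).

Definition g_tail (T : R) := \sum_(1 <= m < M.+1 | T <= m%:R) g m.

Lemma sum_f2h_ge0 : 0 <= sum_f2h.
Proof. by apply: sumr_ge0 => n _; rewrite mulr_ge0 ?sqr_ge0 ?h_ge0. Qed.

Lemma calB_sum_ge0 eps : 0 <= calB_sum eps.
Proof.
apply: sumr_ge0 => n _; rewrite mulr_ge0 ?g_ge0 //.
by apply: sumr_ge0 => q _; rewrite mulr_ge0 ?powR_ge0 ?f_ge0.
Qed.

Lemma sum_f2h_le_calA_sum : sum_f2h <= calA_sum.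
Proof.
apply: ler_sum_nat => n /andP[n_ge1 _].
have n_sigma_gt0 : 0 < n%:R `^ sigma :> R by apply: powR_gt0; rewrite ltr0n.
rewrite (bigD1_seq n) ?divisors_id ?divisors_uniq //= mulrDr.
have -> : f n ^+ 2 * h n = g n * (f n * n%:R `^ sigma).
  by rewrite /g; field; rewrite gt_eqF.
rewrite lerDl mulr_ge0 ?g_ge0 //.
by apply: sumr_ge0 => q _; rewrite mulr_ge0 ?powR_ge0 ?f_ge0.
Qed.

Lemma g_dvd_factor n q : sqfree_over inP n -> (q %| n)%N ->
  g n * (f q * q%:R `^ sigma) = f q ^+ 2 * h q * g (n %/ q).
Proof.
move=> sn qn; have /and3P[n_gt0 _ _] := sn.
have q_gt0 : (0 < q)%N by apply: dvdn_gt0 qn.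
have nq_gt0 : (0 < n %/ q)%N by rewrite divn_gt0 // dvdn_leq.
have en : n%:R = q%:R * (n %/ q)%:R :> R by rewrite -natrM mulnC divnK.
rewrite /g (f_dvd_mul sn qn) (h_dvd_mul sn qn) en powRM //; field.
by rewrite !gt_eqF ?powR_gt0 ?ltr0n.
Qed.

Lemma calB_term_le (T : R) n : 0 < T -> (1 <= n <= M)%N ->
  g n * \sum_(q <- divisors n | q%:R <= n%:R / T) f q * q%:R `^ sigma
  <= \sum_(1 <= q < M.+1 | (q %| n)%N)
       f q ^+ 2 * h q * (if T <= (n %/ q)%:R then g (n %/ q) else 0).
Proof.
move=> T_gt0 nM; rewrite -[leRHS]big_filter -(perm_big _ (perm_divisors_index_iota nM)).
rewrite mulr_sumr big_mkcond /= big_seq [leRHS]big_seq.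
apply: ler_sum => q; rewrite -dvdn_divisors ?(andP nM).1 // => qn.
have q_gt0 : (0 < q)%N by apply: dvdn_gt0 qn; case/andP: nM.
have rhs_ge0 : 0 <= f q ^+ 2 * h q * (if T <= (n %/ q)%:R then g (n %/ q) else 0).
  apply: mulr_ge0; first by rewrite mulr_ge0 ?sqr_ge0 ?h_ge0.
  by case: ifP => // _; apply: g_ge0.
case: ifPn => // qT; have [sn|nsn] := boolP (sqfree_over inP n); last first.
  by rewrite /g fE (negbTE nsn) !mul0r.
rewrite g_dvd_factor // ifT // natf_div // ler_pdivlMr ?ltr0n //.
by rewrite mulrC -ler_pdivlMr.
Qed.

Lemma calB_sum_le eps : (0 < N)%N -> calB_sum eps <= sum_f2h * g_tail (N%:R `^ eps).
Proof.
move=> N_gt0; set T := N%:R `^ eps.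
have T_gt0 : 0 < T by apply: powR_gt0; rewrite ltr0n.
pose G m := if T <= m%:R then g m else 0.
apply: (@le_trans _ _ (\sum_(1 <= n < M.+1) \sum_(1 <= q < M.+1)
          (if (q %| n)%N then f q ^+ 2 * h q * G (n %/ q)%N else 0))).
  apply: ler_sum_nat => n /andP[n_ge1 nM]; rewrite -big_mkcond.
  by apply: calB_term_le; rewrite // n_ge1 -ltnS.
rewrite exchange_big /= /sum_f2h /g_tail mulr_suml.
apply: ler_sum_nat => q /andP[q_ge1 _].
have -> : \sum_(1 <= n < M.+1)
    (if (q %| n)%N then f q ^+ 2 * h q * G (n %/ q)%N else 0) =
    f q ^+ 2 * h q * \sum_(1 <= n < M.+1 | (q %| n)%N) G (n %/ q)%N.
  by rewrite [in RHS]big_mkcond mulr_sumr; apply: eq_bigr => n _; case: ifP; rewrite ?mulr0.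
apply: ler_wpM2l; first by rewrite mulr_ge0 ?sqr_ge0 ?h_ge0.
rewrite [leRHS]big_mkcond; apply: sum_dvdn_div_le => // m.
by rewrite /G; case: ifP => // _; apply: g_ge0.
Qed.

Lemma g_tail_ge0 T : 0 <= g_tail T.
Proof. by apply: sumr_ge0 => m _; apply: g_ge0. Qed.

Lemma normr_calB_le eps d : (0 < N)%N -> g_tail (N%:R `^ eps) <= d ->
  `|calB A gam N eps| <= d * calA A gam N.
Proof.
move=> N_gt0 tail_le.
have S_ge0 : 0 <= (sum_f2 A gam N)^-1 by rewrite invr_ge0 sumr_ge0 // => n _; apply: sqr_ge0.
have d_ge0 : 0 <= d := le_trans (g_tail_ge0 _) tail_le.
rewrite -[calB _ _ _ _]/((sum_f2 A gam N)^-1 * calB_sum eps).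
rewrite -[calA _ _ _]/((sum_f2 A gam N)^-1 * calA_sum).
rewrite ger0_norm ?mulr_ge0 ?calB_sum_ge0 // mulrCA ler_wpM2l //.
apply: le_trans (calB_sum_le eps N_gt0) _; rewrite mulrC.
by apply: ler_pM; rewrite ?g_tail_ge0 ?sum_f2h_ge0 ?sum_f2h_le_calA_sum.
Qed.

Variable alpha : R.
Hypothesis alpha_ge0 : 0 <= alpha.

Definition fp_shift p := fp p * p%:R `^ alpha / p%:R `^ sigma.

Lemma fp_shift_ge0 p : inP p -> 0 <= fp_shift p.
Proof.
by move=> /fp_ge0 fp_p; apply: divr_ge0; [apply: mulr_ge0 | ]; rewrite ?powR_ge0.
Qed.

Lemma f_powR_prod m : sqfree_over inP m ->
  f m * m%:R `^ alpha / m%:R `^ sigma = \prod_(p <- primes m) fp_shift p.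
Proof.
move=> sm; have /and3P[_ /eqP sq _] := sm.
have em : m%:R = \prod_(p <- primes m) p%:R :> R by rewrite -natr_prod sq.
by rewrite fE sm em !powR_prod ?ler0n // -prodfV -!big_split.
Qed.

Definition f_shift m :=
  if sqfree_over inP m then \prod_(p <- primes m) fp_shift p else 0.

Lemma f_shift_ge0 m : 0 <= f_shift m.
Proof.
rewrite /f_shift; case: ifP => // /and3P[_ _ mP].
by rewrite big_seq; apply: prodr_ge0 => p /(allP mP) /fp_shift_ge0.
Qed.

Lemma g_le_f_shift (T : R) m : 0 < T -> T <= m%:R -> g m <= f_shift m / T `^ alpha.
Proof.
move=> T_gt0 Tm; have Ta_gt0 : 0 < T `^ alpha by apply: powR_gt0.
rewrite /f_shift; have [sm|nsm] := boolP (sqfree_over inP m); last first.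
  by rewrite /g fE (negbTE nsm) !mul0r.
have m_gt0 : (0 < m)%N by case/and3P: sm.
have ma : T `^ alpha <= m%:R `^ alpha by apply: ge0_ler_powR => //; rewrite nnegrE ?ler0n // ltW.
rewrite -f_powR_prod //.
have -> : (f m * m%:R `^ alpha / m%:R `^ sigma) / T `^ alpha =
    f m / m%:R `^ sigma * (m%:R `^ alpha / T `^ alpha).
  by field; rewrite !gt_eqF ?powR_gt0 ?ltr0n.
rewrite /g mulrAC; apply: ler_pM.
- by rewrite divr_ge0 ?f_ge0 ?powR_ge0.
- exact: h_ge0.
- by [].
by rewrite (le_trans (h_le1 m)) // ler_pdivlMr // mul1r.
Qed.

Lemma sum_f_shift_le :
  \sum_(1 <= m < M.+1) f_shift m <= expR (\sum_(p < Pbound gam N | inP p) fp_shift p).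
Proof.
rewrite big_mkcond /= -big_mkcond.
apply: le_trans (sum_sqfree_over_prod_le M inP_lt_Pbound fp_shift_ge0) _.
by apply: prod1D_le_expR_sum => p /fp_shift_ge0.
Qed.

Lemma g_tail_le (T : R) : 0 < T ->
  g_tail T <= expR (\sum_(p < Pbound gam N | inP p) fp_shift p) / T `^ alpha.
Proof.
move=> T_gt0; apply: (@le_trans _ _ (\sum_(1 <= m < M.+1 | T <= m%:R) f_shift m / T `^ alpha)).
  by apply: ler_sum => m; apply: g_le_f_shift.
rewrite -mulr_suml ler_wpM2r ?invr_ge0 ?powR_ge0 //.
apply: le_trans sum_f_shift_le.
by rewrite big_mkcond; apply: ler_sum => m _; case: ifP => // _; apply: f_shift_ge0.
Qed.

End Reduction.

Lemma le_eps_quartic_of_cubic_growth (R : realType) (u E eps K : R) :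
  1 <= u -> 1 <= E -> u ^+ 3 / 384 <= E -> 0 < eps -> 0 <= K ->
  2304 <= eps * u -> 2304 * K <= eps * u ->
  (E ^+ 3 * u + K) * (3 * u) <= eps * E ^+ 4.
Proof.
move=> u_ge1 E_ge1 E_ge eps_gt0 K_ge0 eps_u eps_uK.
have u2_le : 6 * u ^+ 2 <= eps * E.
  have : eps * (u ^+ 3 / 384) <= eps * E by rewrite ler_wpM2l // ltW.
  have : 2304 * u ^+ 2 <= eps * u * u ^+ 2 by rewrite ler_wpM2r ?sqr_ge0.
  by rewrite exprS; lra.
have first_half : 3 * u ^+ 2 * E ^+ 3 <= eps * E ^+ 4 / 2.
  have : 6 * u ^+ 2 * E ^+ 3 <= eps * E * E ^+ 3.
    by rewrite ler_wpM2r ?exprn_ge0 // (le_trans _ E_ge1).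
  by rewrite -[eps * E * _]mulrA -exprS; lra.
have second_half : 3 * u * K <= eps * E ^+ 4 / 2.
  have u23 : u ^+ 2 <= u ^+ 3 by apply: ler_weXn2l.
  have E14 : E <= E ^+ 4 by apply: ler_eXnr.
  have : eps * (u ^+ 2 / 384) <= eps * E ^+ 4 by rewrite ler_wpM2l ?(ltW eps_gt0) //; lra.
  have : 2304 * K * u <= eps * u * u by rewrite ler_wpM2r // (le_trans _ u_ge1).
  by rewrite expr2; lra.
have -> : (E ^+ 3 * u + K) * (3 * u) = 3 * u ^+ 2 * E ^+ 3 + 3 * u * K by ring.
lra.
Qed.

Lemma mul_powR_le (R : realType) (gam c u : R) : gam < 1 -> 0 < c ->
  c `^ (1 - gam)^-1 <= u -> c * u `^ gam <= u.
Proof.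
move=> gam_lt1 c_gt0 cu.
have u_gt0 : 0 < u := lt_le_trans (powR_gt0 _ c_gt0) cu.
have c_le : c <= u `^ (1 - gam).
  have -> : c = (c `^ (1 - gam)^-1) `^ (1 - gam).
    by rewrite -powRrM mulVf ?powRr1 ?(ltW c_gt0) // subr_eq0 gt_eqF.
  apply: ge0_ler_powR => //; rewrite ?nnegrE ?powR_ge0 ?(ltW u_gt0) //.
  by rewrite subr_ge0 ltW.
have eu : u = u `^ gam * u `^ (1 - gam).
  rewrite -powRD; first by rewrite addrC subrK powRr1 ?(ltW u_gt0).
  by rewrite (gt_eqF u_gt0) implybT.
by rewrite [leRHS]eu mulrC ler_wpM2l ?powR_ge0.
Qed.

Lemma expR_gap_eventually {R : realType} {gam eps K : R} :
  gam < 1 -> 0 < eps -> 0 <= K ->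
  exists U : R, forall u, U <= u ->
    expR (u `^ gam + u / 2) * u + K <= eps * expR u / (u `^ gam + u + ln u).
Proof.
move=> gam_lt1 eps_gt0 K_ge0; set c := 4 `^ (1 - gam)^-1.
have c_ge0 : 0 <= c by apply: powR_ge0.
have d1 : 0 <= 2304 / eps by rewrite divr_ge0 ?ler0n // ltW.
have d2 : 0 <= 2304 * K / eps by rewrite divr_ge0 ?mulr_ge0 ?ler0n // ltW.
exists (1 + c + 2304 / eps + 2304 * K / eps) => u u_ge.
have u_ge1 : 1 <= u by lra.
have u_gec : c <= u by lra.
have eps_u : 2304 <= eps * u by rewrite -ler_pdivrMl //; lra.
have eps_uK : 2304 * K <= eps * u by rewrite -ler_pdivrMl //; lra.
clear u_ge d1 d2.
have gam_le : 4 * u `^ gam <= u by apply: mul_powR_le; rewrite ?ltr0n.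
have lnu_lt : ln u < u by apply: ln_sublinear; apply: lt_le_trans ltr01 u_ge1.
have lnu_ge0 := ln_ge0 u_ge1; have ug_ge0 := powR_ge0 u gam.
have D_gt0 : 0 < u `^ gam + u + ln u by lra.
have D_le : u `^ gam + u + ln u <= 3 * u by lra.
(* With E = e^(u/4): e^u = E^4, e^(u^gam + u/2) <= E^3 and E >= (u/4)^3/3!. *)
pose E := expR (u / 4).
have E_ge1 : 1 <= E by rewrite -expR0 ler_expR divr_ge0 ?(le_trans ler01 u_ge1).
have E_ge : u ^+ 3 / 384 <= E.
  have := @expR_ge1Dxn R (u / 4) 2 (divr_ge0 (le_trans ler01 u_ge1) (ler0n _ 4)).
  rewrite -/E expr_div_n (_ : (3`!)%:R = 6 :> R) //; lra.
have expRu : expR u = E ^+ 4 by rewrite -expRM_natl; congr expR; lra.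
have expR_le : expR (u `^ gam + u / 2) <= E ^+ 3 by rewrite -expRM_natl ler_expR; lra.
rewrite expRu ler_pdivlMr //.
apply: le_trans _ (@le_eps_quartic_of_cubic_growth R u E eps K
  u_ge1 E_ge1 E_ge eps_gt0 K_ge0 eps_u eps_uK).
apply: ler_pM => //.
- by rewrite addr_ge0 ?mulr_ge0 ?expR_ge0 ?(le_trans ler01 u_ge1).
- exact: ltW.
by rewrite lerD2r ler_wpM2r ?(le_trans ler01 u_ge1).
Qed.

Lemma expR1_ge2 (R : realType) : 2 <= expR 1 :> R.
Proof. by have e1 := expR_ge1Dx (1 : R); lra. Qed.

Lemma powR_invln_le_expR1 {R : realType} {x y : R} :
  0 < x -> x <= y -> 0 < ln y -> x `^ (ln y)^-1 <= expR 1.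
Proof.
move=> x_gt0 xy lny_gt0; rewrite /powR gt_eqF // ler_expR mulrC ler_pdivrMr // mul1r.
by rewrite ler_ln ?posrE ?(lt_le_trans x_gt0 xy).
Qed.

Section Analytic.
Variables (R : realType) (A gam : R) (N : nat).
Hypothesis A_ge0 : 0 <= A.
(* e <= log_2 N gives log_3 N >= 1, and 2 A <= log_2 N gives sigma <= 1. *)
Hypothesis L2_ge : expR 1 + 2 * A <= L2 R N.

Local Notation u := (L2 R N).
Local Notation sigma := (sigma A N).
Local Notation Pup := (Pupper gam N).
Local Notation fp_const := (L1 R N `^ (1 - sigma) * u `^ sigma / L3 R N `^ (1 - sigma)).

Lemma L2_ge_e : expR 1 <= u.
Proof. by have := A_ge0; have := L2_ge; lra. Qed.

Lemma L2_ge1 : 1 <= u.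
Proof. by have := L2_ge_e; have := expR1_ge2 R; lra. Qed.

Lemma L2_gt0 : 0 < u.
Proof. exact: lt_le_trans ltr01 L2_ge1. Qed.

Lemma L1_gt1 : 1 < L1 R N.
Proof.
rewrite ltNge; apply/negP => /ln_le0 L2_le0.
by have := L2_ge1; rewrite /L2 => ?; lra.
Qed.

Lemma L1_gt0 : 0 < L1 R N.
Proof. exact: lt_trans ltr01 L1_gt1. Qed.

Lemma L1E : L1 R N = expR u.
Proof. by rewrite /L2 lnK // posrE L1_gt0. Qed.

Lemma L3_ge1 : 1 <= L3 R N.
Proof.
by rewrite /L3 -[leLHS](expRK 1) ler_ln ?posrE ?expR_gt0 ?L2_gt0 ?L2_ge_e.
Qed.

Lemma sigma_ge : 2^-1 <= sigma.
Proof. by rewrite /sigma lerDl divr_ge0 ?(ltW L2_gt0). Qed.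

Lemma sigma_le1 : sigma <= 1.
Proof.
have : A / u <= 2^-1.
  by rewrite ler_pdivrMr ?L2_gt0 //; have := L2_ge; have := expR1_ge2 R; lra.
by rewrite /sigma; lra.
Qed.

Lemma fp_const_le : fp_const <= L1 R N `^ 2^-1 * u.
Proof.
have s1 := sigma_ge; have s2 := sigma_le1.
have L3_pow_ge1 : 1 <= L3 R N `^ (1 - sigma).
  by rewrite -[leLHS](powRr0 (L3 R N)) ler_powR ?L3_ge1 //; lra.
apply: (@le_trans _ _ (L1 R N `^ (1 - sigma) * u `^ sigma)).
  rewrite ler_pdivrMr ?(lt_le_trans ltr01 L3_pow_ge1) //.
  by rewrite ler_peMr ?mulr_ge0 ?powR_ge0.
apply: ler_pM; rewrite ?powR_ge0 //.
  by rewrite ler_powR ?(ltW L1_gt1) //; lra.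
by rewrite ler1_powR ?L2_ge1.
Qed.

Lemma ln_Pupper : ln Pup = u `^ gam + u + L3 R N.
Proof. by rewrite /Pupper !lnM ?posrE ?mulr_gt0 ?expR_gt0 ?L1_gt0 ?L2_gt0 // expRK. Qed.

Lemma ln_Pupper_gt0 : 0 < ln Pup.
Proof.
by have h1 := L3_ge1; have h2 := L2_ge1; have h3 := powR_ge0 u gam; rewrite ln_Pupper; lra.
Qed.

Lemma inP_ln_gap {p} : inP gam N p -> 1 <= ln p%:R - u - L3 R N.
Proof.
case/and3P => _ p_gt _.
have low_gt0 : 0 < expR 1 * L1 R N * u by rewrite !mulr_gt0 ?expR_gt0 ?L1_gt0 ?L2_gt0.
have : ln (expR 1 * L1 R N * u) <= ln p%:R.
  by rewrite ler_ln ?posrE ?(lt_trans low_gt0 p_gt) // ltW.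
rewrite !lnM ?posrE ?mulr_gt0 ?expR_gt0 ?L1_gt0 ?L2_gt0 // expRK.
by rewrite -/(L2 R N) -/(L3 R N); lra.
Qed.

Lemma fp_ge0 p : inP gam N p -> 0 <= fp A N p.
Proof.
move=> /inP_ln_gap gap; rewrite /fp mulr_ge0 ?divr_ge0 ?mulr_ge0 ?powR_ge0 //.
by lra.
Qed.

Lemma Pupper_gt0 : 0 < Pup.
Proof. by rewrite /Pupper !mulr_gt0 ?expR_gt0 ?L1_gt0 ?L2_gt0. Qed.

Lemma fp_shift_le p : inP gam N p ->
  fp_shift R A N (ln Pup)^-1 p <= L1 R N `^ 2^-1 / L1 R N.
Proof.
move=> pP; have gap := inP_ln_gap pP; case/and3P: pP => _ p_gt p_le.
have e_gt0 : 0 < expR 1 :> R := expR_gt0 1.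
have low_gt0 : 0 < expR 1 * L1 R N * u by rewrite !mulr_gt0 ?L1_gt0 ?L2_gt0.
have p_gt0 : 0 < p%:R :> R := lt_trans low_gt0 p_gt.
have p_ge1 : 1 <= p%:R :> R by rewrite ler1n -(ltr0n R).
have s_ge := sigma_ge.
have C_ge0 : 0 <= fp_const by rewrite divr_ge0 ?mulr_ge0 ?powR_ge0.
have p_le_sq : p%:R <= p%:R `^ sigma * p%:R `^ sigma.
  by rewrite -powRD ?(gt_eqF p_gt0) ?implybT // le1r_powR //; lra.
have pa_le := powR_invln_le_expR1 p_gt0 p_le ln_Pupper_gt0.
have D_gt0 : 0 < ln p%:R - u - L3 R N by lra.
set D := ln p%:R - u - L3 R N.
have -> : fp_shift R A N (ln Pup)^-1 p =
    fp_const * (p%:R `^ (ln Pup)^-1 / (p%:R `^ sigma * p%:R `^ sigma * D)).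
  rewrite /fp_shift /fp -/D; field.
  by rewrite !gt_eqF ?powR_gt0 ?(lt_le_trans ltr01 L3_ge1).
apply: (@le_trans _ _ (L1 R N `^ 2^-1 * u * (expR 1 / p%:R))).
  apply: ler_pM; rewrite ?fp_const_le ?divr_ge0 ?mulr_ge0 ?powR_ge0 ?(ltW e_gt0) ?(ltW D_gt0) //.
  rewrite ler_pdivlMr // mulrAC ler_pdivrMr; last first.
    by rewrite !mulr_gt0 ?powR_gt0.
  by apply: ler_pM; rewrite ?powR_ge0 ?(ltW p_gt0) // -[leLHS]mulr1 ler_pM // ltW.
rewrite -[leRHS](_ : L1 R N `^ 2^-1 * u * (expR 1 / (expR 1 * L1 R N * u)) = _); last first.
  by field; rewrite !gt_eqF ?L1_gt0 ?L2_gt0.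
by rewrite ler_wpM2l ?mulr_ge0 ?powR_ge0 ?(ltW L2_gt0) // ler_pM2l // lef_pV2 ?posrE ?ltW.
Qed.

Lemma sum_fp_shift_le :
  \sum_(p < Pbound gam N | inP gam N p) fp_shift R A N (ln Pup)^-1 p
    <= expR (u `^ gam + u / 2) * u + 1.
Proof.
set B := L1 R N `^ 2^-1 / L1 R N.
have B_ge0 : 0 <= B by rewrite divr_ge0 ?powR_ge0 ?(ltW L1_gt0).
have B_le1 : B <= 1.
  rewrite ler_pdivrMr ?L1_gt0 // mul1r ler1_powR ?(ltW L1_gt1) // invr_le1 ?ler1n //.
  by rewrite unitfE.
have PupB : Pup * B = expR (u `^ gam + u / 2) * u.
  by rewrite /B /Pupper L1E -expRM expRD; field; rewrite gt_eqF ?expR_gt0.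
have Pbound_le : (Pbound gam N)%:R <= Pup + 1.
  by rewrite /Pbound -addn1 natrD lerD2r truncn_le ltW ?Pupper_gt0.
apply: (@le_trans _ _ (\sum_(p < Pbound gam N) B)).
  by rewrite big_mkcond; apply: ler_sum => p _; case: ifP => // /fp_shift_le.
rewrite sumr_const card_ord -[B *+ _]mulr_natl.
apply: le_trans (ler_wpM2r B_ge0 Pbound_le) _.
by rewrite mulrDl mul1r PupB lerD2l.
Qed.

Lemma g_tail_le_of_gap eps delta : 0 < eps -> 0 < delta -> (0 < N)%N ->
  expR (u `^ gam + u / 2) * u + (1 + `|ln delta|)
    <= eps * expR u / (u `^ gam + u + ln u) ->
  g_tail R A gam N (N%:R `^ eps) <= delta.
Proof.
move=> eps_gt0 delta_gt0 N_gt0 gap.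
have alpha_ge0 : 0 <= (ln Pup)^-1 by rewrite invr_ge0 ltW ?ln_Pupper_gt0.
have T_gt0 : 0 < N%:R `^ eps :> R by rewrite powR_gt0 ?ltr0n.
apply: le_trans (@g_tail_le R A gam N fp_ge0 _ alpha_ge0 _ T_gt0) _.
have -> : (N%:R `^ eps) `^ (ln Pup)^-1 = expR (eps * expR u / (u `^ gam + u + ln u)).
  by rewrite -powRrM /powR gt_eqF ?ltr0n // -/(L1 R N) L1E ln_Pupper mulrAC.
rewrite -expRB -[leRHS](lnK delta_gt0) ler_expR.
have := sum_fp_shift_le; have := ler_norm (- ln delta); rewrite normrN.
by lra.
Qed.

Lemma normr_calB_le_of_gap eps delta : 0 < eps -> 0 < delta -> (0 < N)%N ->
  expR (u `^ gam + u / 2) * u + (1 + `|ln delta|)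
    <= eps * expR u / (u `^ gam + u + ln u) ->
  `|calB A gam N eps| <= delta * calA A gam N.
Proof.
move=> eps_gt0 delta_gt0 N_gt0 gap.
by apply: (@normr_calB_le R A gam N fp_ge0) => //; apply: g_tail_le_of_gap.
Qed.

End Analytic.

Lemma L2_eventually_ge {R : realType} (U : R) :
  exists N0 : nat, forall N, (N0 <= N)%N -> (0 < N)%N /\ U <= L2 R N.
Proof.
exists (Num.truncn (expR (expR U))).+1 => N N0_le; split; first exact: leq_trans N0_le.
have N_gt : expR (expR U) < N%:R.
  by apply: lt_le_trans (_ : _ < (Num.truncn (expR (expR U))).+1%:R) _;
     rewrite ?ler_nat // -truncn_le_nat.
have L1_ge : expR U <= L1 R N.
  rewrite /L1 -[leLHS](expRK (expR U)) ler_ln ?posrE ?expR_gt0 ?(ltW N_gt) //.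
  exact: lt_trans (expR_gt0 _) N_gt.
rewrite /L2 -[leLHS](expRK U) ler_ln ?posrE ?expR_gt0 //.
exact: lt_le_trans (expR_gt0 _) L1_ge.
Qed.

Theorem proposition3p3 (R : realType) (A gam eps : R) :
  0 < A -> 0 < gam -> gam < (expR 1 - 1)^-1 -> 0 < eps ->
  forall delta : R, 0 < delta ->
  exists N0 : nat, forall N : nat, (N0 <= N)%N ->
    `|calB A gam N eps| <= delta * calA A gam N.
Proof.
move=> A_gt0 _ gam_lt eps_gt0 delta delta_gt0.
have e_ge2 := expR1_ge2 R.
have gam_lt1 : gam < 1.
  by apply: lt_le_trans gam_lt _; rewrite invr_le1 ?unitfE; lra.
have K_ge0 : 0 <= 1 + `|ln delta| by rewrite addr_ge0 ?normr_ge0.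
have [U gapU] := expR_gap_eventually gam_lt1 eps_gt0 K_ge0.
have [N0 N0_large] := L2_eventually_ge (`|U| + (expR 1 + 2 * A)).
exists N0 => N /N0_large [N_gt0 L2_large].
have A_ge0 := ltW A_gt0.
have U_le := ler_norm U; have U_abs := normr_ge0 U.
have L2_ge : expR 1 + 2 * A <= L2 R N by lra.
apply: (@normr_calB_le_of_gap R A gam N A_ge0 L2_ge) => //.
by apply: gapU; lra.
Qed.
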